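(* Let $p\equiv 1\pmod 4$ be a prime and $\ell\ge 2$ an integer, and put $d=\ell(\ell-1)/2$. Let $Y_0\subset \mathbb{A}^\ell\times\mathbb{A}^d$ be the set of points $(r_1,\ldots,r_\ell,(y_{ij})_{1\le j<i\le \ell})$ satisfying $$r_i-r_j=y_{ij}^2\quad (1\le j<i\le \ell),\qquad y_{ij}\ne 0 \text{ for all } 1\le j<i\le\ell.$$ Then $$n_p(K_\ell)=2^{-d}(\ell!)^{-1}p^{-1}\,|Y_0(\mathbb{F}_p)|.$$
   Context: For $p\equiv 1\pmod 4$ and an $\ell$-tuple $A=(r_1,\ldots,r_\ell)$ of pairwise distinct residues modulo $p$, let $\Gamma_A$ be the graph on vertices $v_1,\ldots,v_\ell$ with $v_i,v_j$ joined by an edge iff $r_i-r_j$ is a nonzero quadratic residue mod $p$ (symmetric since $-1$ is a square). Two tuples are identified if they differ by a permutation of entries or by adding the same residue $a$ to all entries. For a graph $\Gamma$ on $\ell$ vertices, $n_p(\Gamma)$ is the number of such classes of tuples $A$ with $\Gamma_A$ isomorphic to $\Gamma$. $K_\ell$ is the complete graph on $\ell$ vertices. *)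

From HB Require Import structures.
From mathcomp Require Import all_boot all_order all_algebra all_fingroup.
Set Implicit Arguments. Unset Strict Implicit. Unset Printing Implicit Defensive.
Import GRing.Theory.
Local Open Scope ring_scope.

Definition nzsq (p : nat) (x : 'F_p) : bool := (x != 0) && [exists z : 'F_p, z ^+ 2 == x].

(* a simple graph on vertex set 'I_l, given by its adjacency relation *)
Definition graph_iso (l : nat) (G H : rel 'I_l) : bool :=
  [exists s : {perm 'I_l}, [forall i, [forall j, G i j == H (s i) (s j)]]].

Definition GammaA (p l : nat) (A : {ffun 'I_l -> 'F_p}) : rel 'I_l :=
  fun i j => nzsq (A i - A j).

Definition Kgraph (l : nat) : rel 'I_l := fun i j => i != j.

Definition tuple_equiv (p l : nat) (A B : {ffun 'I_l -> 'F_p}) : bool :=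
  [exists s : {perm 'I_l}, exists a : 'F_p, [forall i, B i == A (s i) + a]].

Definition admissible (p l : nat) (G : rel 'I_l) : {set {ffun 'I_l -> 'F_p}} :=
  [set A : {ffun 'I_l -> 'F_p} | injectiveb A &
     graph_iso (GammaA A) G].

Definition n_p (p l : nat) (G : rel 'I_l) : nat :=
  #|[set [set B in admissible p G | tuple_equiv A B] | A in admissible p G]|.

Definition pairs_lt (l : nat) := {ij : 'I_l * 'I_l | (ij.2 < ij.1)%N}.

Definition Y0 (p l : nat) : {set {ffun 'I_l -> 'F_p} * {ffun pairs_lt l -> 'F_p}} :=
  [set ry : {ffun 'I_l -> 'F_p} * {ffun pairs_lt l -> 'F_p} |
     [forall ij : pairs_lt l,
     (ry.1 (val ij).1 - ry.1 (val ij).2 == ry.2 ij ^+ 2) && (ry.2 ij != 0)]].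

(* The group S_l x F_p acts on l-tuples of residues by permuting the entries
   and translating, and the classes counted by n_p(K_l) are its orbits on the
   admissible tuples. For p = 1 (mod 4) this action is free on them: a
   translation that maps an injective tuple to a permutation of itself forces
   p | l, hence l = p; but then every nonzero residue is a difference of two
   entries, hence a square, which is absurd. So there are n_p(K_l) * l! * p
   admissible tuples. As -1 is a square, a tuple is admissible iff r_i - r_j is
   a nonzero square for all j < i, and each nonzero square has exactly two
   square roots y_ij, so |Y_0(F_p)| is 2^d times the number of admissible
   tuples. *)

From HB Require Import structures.
From mathcomp Require Import all_boot all_order all_algebra all_fingroup all_solvable all_field.
From mathcomp Require Import zify ring.
Set Implicit Arguments. Unset Strict Implicit. Unset Printing Implicit Defensive.
Import GRing.Theory Num.Theory.
Local Open Scope ring_scope.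

Section FiniteFieldSquares.

Variable F : finFieldType.

Lemma finField_sqrtN1 : (#|F| %% 4 = 1)%N -> exists c : F, c ^+ 2 = -1.
Proof.
move=> F4; have F_gt1 : (1 < #|F|)%N := card_finNzRing_gt1 F.
set n := #|F|.-1; have [k n4 k_gt0] : exists2 k, n = (4 * k)%N & (0 < k)%N.
  by exists (n %/ 4)%N; rewrite /n; lia.
have unity_n (x : F) : x != 0 -> x ^+ n = 1.
  move=> x0; apply: (mulIf x0); rewrite mul1r -exprSr /n prednK ?expf_card //.
  by apply/card_gt0P; exists x.
have /hasP [z _ z_prim] : has n.-primitive_root (enum (predC1 (0 : F))).
  apply: has_prim_root; first by rewrite /n; lia.
  - by apply/allP => x; rewrite mem_enum unity_rootE => /unity_n ->.
  - exact: enum_uniq.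
  - by rewrite -cardE cardC1.
exists (z ^+ k); apply/eqP.
have : (z ^+ k) ^+ 2 ^+ 2 == 1.
  by rewrite -!exprM (_ : (k * (2 * 2))%N = n) ?prim_expr_order // n4; lia.
rewrite sqrf_eq1 => /orP [|//]; rewrite -exprM -(prim_order_dvd z_prim) n4.
by move/dvdn_leq; lia.
Qed.

Lemma finField_nonsquare : 2%:R != 0 :> F -> exists z : F, forall w, w ^+ 2 != z.
Proof.
move=> two_nz; pose sq (w : F) := w ^+ 2.
have [z z_ns|all_sq] := pickP [pred z | z \notin codom sq].
  by exists z => w; apply: contraNneq z_ns => <-; apply: codom_f.
have /image_injP sq_inj : #|codom sq| == #|F|.
  by rewrite eq_cardT -?cardE // => z; apply/negbFE/all_sq.
have : 1 == -1 :> F by apply/eqP/sq_inj; rewrite // /sq sqrrN.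
by rewrite -addr_eq0 -mulr2n (negPf two_nz).
Qed.

Lemma card_sqrt_sqr (w : F) :
  2%:R != 0 :> F -> w != 0 -> #|[pred z : F | z ^+ 2 == w ^+ 2]| = 2%N.
Proof.
move=> two_nz w_nz; rewrite (eq_card (B := pred2 w (- w))) => [|z]; last first.
  by rewrite !inE eqf_sqr.
by rewrite card2 -addr_eq0 -mulr2n -[w *+ 2]mulr_natr mulf_eq0 negb_or w_nz two_nz.
Qed.

End FiniteFieldSquares.

Lemma card_family_prod (aT rT : finType) (F : aT -> pred rT) :
  #|(family F : simpl_pred {ffun aT -> rT})| = (\prod_x #|F x|)%N.
Proof. by rewrite card_family foldrE big_image. Qed.

Lemma prod_nat_mul_bool (T : finType) (k : nat) (b : pred T) :
  (\prod_(x : T) (k * b x) = [forall x, b x] * k ^ #|T|)%N.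
Proof.
case: (boolP [forall x, b x]) => [/forallP b_all | /forallPn [x /negPf bx_false]].
  by rewrite mul1n -prod_nat_const; apply: eq_bigr => x _; rewrite b_all muln1.
by rewrite (bigD1 x) //= bx_false muln0.
Qed.

Lemma card_pairs_lt (l : nat) : #|{: pairs_lt l}| = (l * (l - 1) %/ 2)%N.
Proof.
rewrite card_sig -sum1_card /=.
rewrite -(pair_big_dep xpredT (fun i j : 'I_l => (j < i)%N) (fun _ _ => 1%N)) /=.
rewrite (eq_bigr (fun i : 'I_l => val i)) => [|i _]; last first.
  by rewrite -(big_ord_widen _ (fun=> 1%N) (ltnW (ltn_ord i))) sum1_card card_ord.
by rewrite -(big_mkord xpredT id) bin2_sum bin2 divn2 subn1.
Qed.

Section Relabelling.

Variables p l : nat.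
Implicit Types A B : {ffun 'I_l -> 'F_p}.

Definition relabel A (sa : {perm 'I_l} * 'F_p) : {ffun 'I_l -> 'F_p} :=
  [ffun i => A (sa.1 i) + sa.2].

Lemma relabel1 A : relabel A (1%g, 0) = A.
Proof. by apply/ffunP => i; rewrite ffunE perm1 addr0. Qed.

Lemma relabelM A s a t b :
  relabel (relabel A (s, a)) (t, b) = relabel A ((t * s)%g, a + b).
Proof. by apply/ffunP => i; rewrite !ffunE permM addrA. Qed.

Lemma sum_relabel A sa : \sum_i relabel A sa i = \sum_i A i + sa.2 *+ l.
Proof.
rewrite (eq_bigr (fun i => A (sa.1 i) + sa.2)) => [|i _]; last by rewrite ffunE.
rewrite big_split sumr_const card_ord /=; congr (_ + _).
by rewrite [RHS](reindex_inj (@perm_inj _ sa.1)).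
Qed.

Lemma tuple_equivP A B : reflect (exists sa, B = relabel A sa) (tuple_equiv A B).
Proof.
apply: (iffP existsP) => [[s /existsP [a /forallP eqB]]|[[s a] ->]].
  by exists (s, a); apply/ffunP => i; rewrite ffunE; apply/eqP.
by exists s; apply/existsP; exists a; apply/forallP => i; rewrite ffunE.
Qed.

Lemma tuple_equiv_equivalence : equivalence_rel (@tuple_equiv p l).
Proof.
move=> A B C; split; first by apply/tuple_equivP; exists (1%g, 0); rewrite relabel1.
move=> /tuple_equivP [[s a] ->]; apply/idP/idP => /tuple_equivP [[t b] ->].
  apply/tuple_equivP; exists ((t * s^-1)%g, b - a).
  by rewrite relabelM -mulgA mulVg mulg1 addrC subrK.
by apply/tuple_equivP; exists ((t * s)%g, a + b); rewrite relabelM.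
Qed.

Lemma card_admissible_uniform (G : rel 'I_l) (k : nat) :
  (forall A, A \in admissible p G ->
     #|[set B in admissible p G | tuple_equiv A B]| = k) ->
  #|admissible p G| = (n_p p G * k)%N.
Proof.
move=> card_class.
have equiv_in : {in admissible p G & &, equivalence_rel (@tuple_equiv p l)}.
  by move=> A B C _ _ _; apply: tuple_equiv_equivalence.
rewrite (card_partition (equivalence_partitionP equiv_in)) -sum_nat_const.
by apply: eq_bigr => _ /imsetP [A A_adm ->]; apply: card_class.
Qed.

Lemma admissible_KgraphP A :
  reflect (forall i j, i != j -> nzsq (A i - A j)) (A \in admissible p (@Kgraph l)).
Proof.
rewrite inE; apply: (iffP andP) => [[_ /existsP [s /forallP GammaA_s]] i j|nzsqA].
  have /forallP /(_ j) /eqP := GammaA_s i.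
  by rewrite /GammaA /Kgraph (inj_eq perm_inj) => ->.
have A_inj : injective A.
  by move=> i j; apply: contra_eq => /nzsqA /andP [+ _]; rewrite subr_eq0.
split; first exact/injectiveP.
apply/existsP; exists 1%g; apply/forallP => i; apply/forallP => j.
rewrite !perm1 /GammaA /Kgraph; have [->|/nzsqA -> //] := eqVneq i j.
by rewrite subrr /nzsq eqxx.
Qed.

Lemma admissible_inj A : A \in admissible p (@Kgraph l) -> injective A.
Proof. by rewrite inE => /andP [/injectiveP]. Qed.

Lemma admissible_relabel A sa :
  A \in admissible p (@Kgraph l) -> relabel A sa \in admissible p (@Kgraph l).
Proof.
move=> /admissible_KgraphP nzsqA; apply/admissible_KgraphP => i j i_neq_j.
rewrite !ffunE opprD addrACA subrr addr0.
by apply: nzsqA; rewrite (inj_eq perm_inj).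
Qed.

Lemma tuple_class_relabel A : A \in admissible p (@Kgraph l) ->
  [set B in admissible p (@Kgraph l) | tuple_equiv A B] = relabel A @: setT.
Proof.
move=> A_adm; apply/setP => B; rewrite inE.
apply/andP/imsetP => [[_ /tuple_equivP [sa ->]]|[sa _ ->]]; first by exists sa.
by split; [apply: admissible_relabel | apply/tuple_equivP; exists sa].
Qed.

End Relabelling.

Section PrimeOneModFour.

Variable p : nat.
Hypotheses (p_prime : prime p) (p_mod4 : (p %% 4 = 1)%N).

Lemma Fp_two_neq0 : 2%:R != 0 :> 'F_p.
Proof.
have p_gt2 : (2 < p)%N by have := prime_gt1 p_prime; lia.
by rewrite -(dvdn_pcharf (pchar_Fp p_prime)) gtnNdvd.
Qed.

Lemma Fp_sqrtN1 : exists c : 'F_p, c ^+ 2 = -1.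
Proof. by apply: finField_sqrtN1; rewrite card_Fp. Qed.

Lemma nzsqN (x : 'F_p) : nzsq (- x) = nzsq x.
Proof.
have [c c2] := Fp_sqrtN1.
suff nzsqN_imp (y : 'F_p) : nzsq y -> nzsq (- y).
  by apply/idP/idP => /nzsqN_imp //; rewrite opprK.
case/andP => y_nz /existsP [w /eqP w2]; rewrite /nzsq oppr_eq0 y_nz.
by apply/existsP; exists (c * w); rewrite exprMn c2 w2 mulN1r.
Qed.

Lemma card_nzsq_sqrt (x : 'F_p) :
  #|[pred z : 'F_p | (x == z ^+ 2) && (z != 0)]| = (2 * nzsq x)%N.
Proof.
case: (boolP (nzsq x)) => [/andP [x_nz /existsP [w /eqP w2]] | x_nsq].
  have w_nz : w != 0 by apply: contraNneq x_nz => w0; rewrite -w2 w0 expr0n.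
  rewrite /= muln1 -[RHS](card_sqrt_sqr Fp_two_neq0 w_nz).
  apply: eq_card => z; rewrite !inE -w2 [_ == z ^+ 2]eq_sym andb_idr // => /eqP z2.
  by apply: contraNneq x_nz => z0; rewrite -w2 -z2 z0 expr0n.
apply: eq_card0 => z; rewrite !inE; apply: contraNF x_nsq => /andP [/eqP x2 z_nz].
by rewrite /nzsq x2 expf_eq0 (negPf z_nz) andbF; apply/existsP; exists z.
Qed.

Variable l : nat.

Lemma admissible_size_lt A : A \in admissible p (@Kgraph l) -> (l < p)%N.
Proof.
move=> A_adm; have := leq_card A (admissible_inj A_adm).
rewrite card_ord card_Fp // leq_eqVlt => /orP [/eqP l_eq_p|//].
have A_onto (x : 'F_p) : x \in codom A.
  have card_le : (#|'F_p| <= #|'I_l|)%N by rewrite card_Fp // card_ord l_eq_p.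
  exact: (inj_card_onto (admissible_inj A_adm) card_le).
have [z z_nsq] := finField_nonsquare Fp_two_neq0.
have z_nz : z != 0 by apply: contraNneq (z_nsq 0) => ->; rewrite expr0n.
have /codomP [i A_i] := A_onto z; have /codomP [j A_j] := A_onto 0.
have i_neq_j : i != j by apply: contraNneq z_nz => i_eq_j; rewrite A_i A_j i_eq_j.
have /andP [_ /existsP [w]] := admissible_KgraphP _ A_adm i j i_neq_j.
by rewrite -A_i -A_j subr0 (negPf (z_nsq w)).
Qed.

Lemma relabel_inj A :
  (0 < l)%N -> A \in admissible p (@Kgraph l) -> injective (relabel A).
Proof.
move=> l_gt0 A_adm [s a] [t b] eq_relabel.
have a_eq_b : a = b.
  have := congr1 (fun B : {ffun 'I_l -> 'F_p} => \sum_i B i) eq_relabel.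
  rewrite /= !sum_relabel => /addrI /eqP.
  rewrite -subr_eq0 -mulrnBl -mulr_natr mulf_eq0 subr_eq0 -(dvdn_pcharf (pchar_Fp p_prime)).
  by rewrite (gtnNdvd l_gt0 (admissible_size_lt A_adm)) orbF => /eqP.
have s_eq_t : s = t.
  apply/permP => i; apply: (admissible_inj A_adm); apply: (addIr a).
  have := congr1 (fun B : {ffun 'I_l -> 'F_p} => B i) eq_relabel.
  by rewrite /= !ffunE a_eq_b.
by rewrite a_eq_b s_eq_t.
Qed.

Lemma card_admissible_Kgraph : (0 < l)%N ->
  #|admissible p (@Kgraph l)| = (n_p p (@Kgraph l) * (l`! * p))%N.
Proof.
move=> l_gt0; apply: card_admissible_uniform => A A_adm.
rewrite tuple_class_relabel // card_imset; last exact: relabel_inj.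
by rewrite cardsT card_prod card_Sn card_Fp.
Qed.

Lemma admissible_KgraphE (A : {ffun 'I_l -> 'F_p}) :
  (A \in admissible p (@Kgraph l)) =
  [forall ij : pairs_lt l, nzsq (A (val ij).1 - A (val ij).2)].
Proof.
apply/admissible_KgraphP/forallP => [nzsqA [[i j] /= j_lt_i] | nzsqA i j].
  by apply: nzsqA; rewrite neq_ltn j_lt_i orbT.
rewrite neq_ltn => /orP [i_lt_j|j_lt_i]; last exact: (nzsqA (exist _ (i, j) j_lt_i)).
by rewrite -nzsqN opprB; apply: (nzsqA (exist _ (j, i) i_lt_j)).
Qed.

Lemma card_Y0_fibre (r : {ffun 'I_l -> 'F_p}) :
  #|[pred y | (r, y) \in Y0 p l]|
  = ((r \in admissible p (@Kgraph l)) * 2 ^ #|{: pairs_lt l}|)%N.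
Proof.
pose roots (ij : pairs_lt l) :=
  [pred z : 'F_p | (r (val ij).1 - r (val ij).2 == z ^+ 2) && (z != 0)].
rewrite (eq_card (B := family roots)) => [|y]; last first.
  by rewrite !inE; apply/forallP/familyP => y_roots ij; have := y_roots ij; rewrite inE.
rewrite card_family_prod (eq_bigr _ (fun ij _ => card_nzsq_sqrt _)).
by rewrite prod_nat_mul_bool admissible_KgraphE mulnC.
Qed.

Lemma card_Y0 : #|Y0 p l| = (#|admissible p (@Kgraph l)| * 2 ^ #|{: pairs_lt l}|)%N.
Proof.
have -> : #|Y0 p l| = (\sum_r #|[pred y | (r, y) \in Y0 p l]|)%N.
  under [RHS]eq_bigr => r _ do rewrite -sum1_card big_mkcond /=.
  by rewrite -sum1_card big_mkcond pair_bigA; apply: eq_bigr => -[r y].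
rewrite -sum_nat_const [RHS]big_mkcond; apply: eq_bigr => r _.
by rewrite card_Y0_fibre; case: (r \in _); rewrite ?mul1n.
Qed.

End PrimeOneModFour.

Unset Implicit Arguments.
Theorem mainTheorem4 (p l : nat) :
  prime p -> (p %% 4 = 1)%N -> (2 <= l)%N ->
  ((@n_p p l (@Kgraph l))%:R : rat)
    = ((2 ^ (l * (l - 1) %/ 2))%N%:R)^-1 * ((l`!)%N%:R)^-1 * (p%:R)^-1
      * (#|@Y0 p l|)%:R.
Proof.
move=> p_prime p_mod4 l_ge2.
have l_gt0 : (0 < l)%N by apply: leq_trans l_ge2.
rewrite card_Y0 // card_admissible_Kgraph // card_pairs_lt !natrM.
have two_pow_nz : (2 ^ (l * (l - 1) %/ 2))%:R != 0 :> rat by rewrite pnatr_eq0 expn_eq0.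
have fact_nz : (l`!)%:R != 0 :> rat by rewrite pnatr_eq0 -lt0n fact_gt0.
have p_nz : p%:R != 0 :> rat by rewrite pnatr_eq0 -lt0n prime_gt0.
by field; rewrite two_pow_nz fact_nz p_nz.
Qed.
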